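(* Consider the two-type branching process in random environment with geometric offspring laws described in the context, started from $z=(z_1,z_2)\in\mathbb N_0^2$, and let $S_i(k)=X_i(1)+\dots+X_i(k)$, $S_i(0)=0$. There is a constant $C$ such that for every $\varepsilon>0$, every $i\in\{1,2\}$, every $n\ge1$ and every realization of the environment $\mathbf\Pi$, $$\mathbf P_z\Big(\max_{k\le n}\big|\log Z_i(k)-S_i(k)\big|\ge\varepsilon\sqrt n,\ Z_i(n)>0\ \Big|\ \mathbf\Pi\Big)\le C z_i\,n\,e^{-\varepsilon\sqrt n}.$$
   Context: Environment: $(P_1,P_2)$ is a random vector in $(0,1)^2$; $\mathbf Q=(Q_1,Q_2)$ with $Q_i(\{j\})=P_i(1-P_i)^j$, $j\in\mathbb N_0$; the environment $\mathbf\Pi=(\mathbf Q(n))_{n\ge1}$ consists of i.i.d. copies of $\mathbf Q$ (parameters $(P_1(n),P_2(n))$). Given $\mathbf\Pi$ and $Z(n)=(z_1,z_2)$, $Z(n+1)$ is distributed as $\big(\sum_{j=1}^{z_1}\xi_1^{(n)}(j),\sum_{j=1}^{z_2}\xi_2^{(n)}(j)\big)$ with, conditionally on $\mathbf\Pi$, independent $\xi_i^{(n)}(j)$ of law $Q_i(n+1)$. $\mathbf P_z$ is the law with $Z(0)=z$. $X_i(n)=\log\frac{1-P_i(n)}{P_i(n)}$ is the logarithm of the mean of $Q_i(n)$. *)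

From HB Require Import structures.
From mathcomp Require Import all_boot all_order all_algebra.
From mathcomp Require Import all_classical all_reals all_analysis.
Set Implicit Arguments. Unset Strict Implicit. Unset Printing Implicit Defensive.
Import Order.TTheory GRing.Theory Num.Theory.
Local Open Scope ring_scope.

Section BPRE.
Variable R : realType.

Definition geom_pmf (p : R) (j : nat) : R := p * (1 - p) ^+ j.

Definition conv (f g : nat -> R) (y : nat) : R :=
  \sum_(j < y.+1) f j * g (y - j)%N.

Fixpoint convpow (f : nat -> R) (x : nat) : nat -> R :=
  match x with
  | 0 => fun y => (y == 0%N)%:R
  | x'.+1 => conv f (convpow f x')
  end.

(* type coordinate i in {1,2}, encoded as i : 'I_2 (0 <-> type 1, 1 <-> type 2) *)
Definition coordt (i : 'I_2) (x : nat * nat) : nat :=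
  if i == ord0 then x.1 else x.2.

Definition par (i : 'I_2) (q : R * R) : R := if i == ord0 then q.1 else q.2.

(* one-step transition given the environment parameters q = (P_1(n+1),P_2(n+1)):
   the two coordinates are, conditionally on the environment, independent sums
   of i.i.d. geometric offspring numbers *)
Definition trans (q : R * R) (x y : nat * nat) : R :=
  convpow (geom_pmf q.1) x.1 y.1 * convpow (geom_pmf q.2) x.2 y.2.

(* Quenched probability, given the environment P (P n = (P_1(n),P_2(n)), n >= 1),
   that the path [Z(k); Z(k+1); ...; Z(k+m)] started at Z(k) = x satisfies E. *)
Fixpoint qlaw (P : nat -> R * R) (k m : nat) (x : nat * nat)
    (E : seq (nat * nat) -> bool) : \bar R :=
  match m with
  | 0 => ((E [:: x])%:R)%:E
  | m'.+1 => \esum_(y in [set: nat * nat])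
               ((trans (P k.+1) x y)%:E * qlaw P k.+1 m' y (fun s => E (x :: s)))%E
  end.

Definition quenched (P : nat -> R * R) (z : nat * nat) (n : nat)
    (E : seq (nat * nat) -> bool) : \bar R := qlaw P 0 n z E.

Definition Xenv (P : nat -> R * R) (i : 'I_2) (n : nat) : R :=
  ln ((1 - par i (P n)) / par i (P n)).

Definition Senv (P : nat -> R * R) (i : 'I_2) (k : nat) : R :=
  \sum_(1 <= j < k.+1) Xenv P i j.

Definition dev_event (P : nat -> R * R) (i : 'I_2) (n : nat) (eps : R)
    (s : seq (nat * nat)) : bool :=
  [exists k : 'I_n.+1,
     eps * Num.sqrt (n%:R) <=
       `| ln ((coordt i (nth (0%N, 0%N) s k))%:R) - Senv P i k | ]
  && (0 < coordt i (nth (0%N, 0%N) s n))%N.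

End BPRE.

From HB Require Import structures.
From mathcomp Require Import all_boot all_order all_algebra.
From mathcomp Require Import all_classical all_reals all_analysis.
From mathcomp Require Import ring lra.
Import Order.TTheory GRing.Theory Num.Theory.
Local Open Scope ring_scope.

(* Each geometric generating function
   f_p (w) = p / (1 - (1 - p) w) is a Moebius map fixing 1, so the generating
   function G of Z_i(k) started from one individual satisfies
   1 / (1 - G t) = exp (- S_i(k)) / (1 - t) + b for some b >= 0.  With test
   points u, v depending on S_i(k) +- T, the indicator of
   {Z_i(k) > 0, |log Z_i(k) - S_i(k)| >= T} is at most
   2 (1 - u ^ Z_i(k)) + 2 (v ^ Z_i(k) - 0 ^ Z_i(k)); given Z(0) = z this has
   expectation 2 (1 - G(u) ^ z_i) + 2 (G(v) ^ z_i - G(0) ^ z_i), which the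
   formula for 1 / (1 - G) bounds by 6 z_i exp (- T).  An extinct type never
   revives, so Z_i(n) > 0 forces Z_i(k) > 0 for all k <= n, and a union bound
   over k <= n gives the constant C = 12. *)

Set Implicit Arguments. Unset Strict Implicit. Unset Printing Implicit Defensive.

Section NonnegSeries.
Variable R : realType.
Implicit Types (a b : nat -> R) (ra rb : R).
Local Open Scope ereal_scope.

Lemma nneseries_cauchy_product a b ra rb :
  (forall j, 0 <= a j)%R -> (forall j, 0 <= b j)%R ->
  \sum_(j <oo) (a j)%:E = ra%:E -> \sum_(j <oo) (b j)%:E = rb%:E ->
  \sum_(y <oo) (\sum_(j < y.+1) a j * b (y - j)%N)%R%:E = (ra * rb)%:E.
Proof.
move=> a0 b0 ha hb.
have ab0 j y : 0 <= (a j * b y)%:E by rewrite lee_fin mulr_ge0.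
have finE y : (\sum_(j < y.+1) a j * b (y - j)%N)%R%:E =
    \sum_(j <oo) (if (j <= y)%N then (a j * b (y - j)%N)%:E else 0).
  rewrite (nneseries_split 0 y.+1); last by move=> k _; case: ifP.
  rewrite eseries0 ?adde0; last by move=> k; rewrite ltnNge => /negbTE ->.
  by rewrite big_mkord -sumEFin; apply: eq_bigr => k _; rewrite -ltnS ltn_ord.
rewrite (eq_eseriesr (fun y _ => finE y)) nneseries_interchange; last first.
  by move=> j y; case: ifP.
transitivity (\sum_(j <oo) (rb%:E * (a j)%:E)).
  apply: eq_eseriesr => j _.
  rewrite -(eseries_mkcond (P := fun y => (j <= y)%N)) -ereal_series.
  rewrite -nneseries_addn // (eq_eseriesr (g := fun y => (a j)%:E * (b y)%:E)).
    by rewrite nneseriesZl ?hb 1?muleC // => y _; rewrite lee_fin.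
  by move=> y _; rewrite addnK EFinM.
by rewrite nneseriesZl ?ha -?EFinM 1?mulrC // => j _; rewrite lee_fin.
Qed.

Lemma esum_pairE (a : nat * nat -> \bar R) : (forall y, 0 <= a y) ->
  \esum_(y in [set: nat * nat]) a y = \sum_(i <oo) \sum_(j <oo) a (i, j).
Proof.
move=> a0.
have -> : [set: nat * nat]%classic = ([set: nat] `*`` (fun=> [set: nat]))%classic.
  by apply/seteqP; split.
rewrite (eq_esum (b := fun y => a (y.1, y.2))); last by move=> [].
rewrite -(@esum_esum _ _ _ _ _ (fun i j => a (i, j))) // -nneseries_esumT.
  by apply: eq_eseriesr => i _; rewrite -nneseries_esumT.
by move=> i; apply: esum_ge0.
Qed.

Lemma esum_pairZl (c : R) (a : nat * nat -> \bar R) :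
  (0 <= c)%R -> (forall y, 0 <= a y) ->
  \esum_(y in [set: nat * nat]) (c%:E * a y)
  = c%:E * \esum_(y in [set: nat * nat]) a y.
Proof.
move=> c0 a0; rewrite !esum_pairE // => [|y]; last exact: mule_ge0.
rewrite -nneseriesZl => [|i _]; last exact: nneseries_ge0.
by apply: eq_eseriesr => i _; rewrite nneseriesZl.
Qed.

Lemma esum_pair_mul a b ra rb :
  (forall j, 0 <= a j)%R -> (forall j, 0 <= b j)%R ->
  \sum_(j <oo) (a j)%:E = ra%:E -> \sum_(j <oo) (b j)%:E = rb%:E ->
  \esum_(y in [set: nat * nat]) (a y.1 * b y.2)%:E = (ra * rb)%:E.
Proof.
move=> a0 b0 ha hb; rewrite esum_pairE => [|y]; last by rewrite lee_fin mulr_ge0.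
transitivity (\sum_(i <oo) (rb%:E * (a i)%:E)).
  apply: eq_eseriesr => i _ /=; under eq_eseriesr do rewrite EFinM.
  by rewrite nneseriesZl ?hb 1?muleC // => j _; rewrite lee_fin.
by rewrite nneseriesZl ?ha -?EFinM 1?mulrC // => i _; rewrite lee_fin.
Qed.

End NonnegSeries.

Section GeometricGf.
Variable R : realType.
Implicit Types (p u w : R).

Definition geom_gf p u : R := p / (1 - (1 - p) * u).

Lemma geom_pmf_ge0 p : 0 < p < 1 -> forall j, 0 <= geom_pmf p j.
Proof.
by case/andP=> p0 p1 j; rewrite /geom_pmf mulr_ge0 ?ltW // exprn_gt0 // subr_gt0.
Qed.

Lemma geom_pgf p u : 0 < p < 1 -> 0 <= u <= 1 ->
  (\sum_(j <oo) (geom_pmf p j * u ^+ j)%:E = (geom_gf p u)%:E)%E.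
Proof.
move=> /andP[p0 p1] /andP[u0 u1].
have z0 : 0 <= (1 - p) * u by rewrite mulr_ge0 // subr_ge0 ltW.
have z1 : `|(1 - p) * u| < 1.
  rewrite ger0_norm //; apply: (@le_lt_trans _ _ (1 - p)).
    by rewrite -[leRHS]mulr1 ler_wpM2l // subr_ge0 ltW.
  by rewrite ltrBlDr ltrDl.
transitivity (limn (EFin \o series (geometric p ((1 - p) * u)))).
  apply/congr_lim/funext => n /=; rewrite /series /= sumEFin.
  by congr (_%:E); apply: eq_bigr => k _; rewrite /geom_pmf exprMn mulrA.
rewrite /geom_gf EFin_lim; last exact: is_cvg_geometric_series.
have /(@cvg_unique _ (@Rhausdorff R)) := @cvg_geometric_series _ p _ z1.
by move/(_ _ (@is_cvg_geometric_series _ p _ z1)) => ->.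
Qed.

Lemma geom_gf_01 p w : 0 < p < 1 -> 0 <= w <= 1 -> 0 <= geom_gf p w <= 1.
Proof.
move=> /andP[p0 p1] /andP[w0 w1].
have hd : p <= 1 - (1 - p) * w.
  by rewrite lerBrDr -lerBrDl -[leRHS]mulr1 ler_wpM2l // subr_ge0 ltW.
have d0 : 0 < 1 - (1 - p) * w by apply: lt_le_trans hd.
by rewrite /geom_gf divr_ge0 ?(ltW p0) ?(ltW d0) //= ler_pdivrMr // mul1r.
Qed.

Lemma geom_gf1 p : 0 < p -> geom_gf p 1 = 1.
Proof. by move=> p0; rewrite /geom_gf mulr1 opprB addrC subrK divff // gt_eqF. Qed.

Lemma geom_gf_lfrac p w : 0 < p < 1 -> 0 <= w < 1 ->
  0 <= geom_gf p w < 1 /\ (1 - geom_gf p w)^-1 = p / (1 - p) * (1 - w)^-1 + 1.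
Proof.
move=> /andP[p0 p1] /andP[w0 w1].
have h1 : 0 < (1 - p) * (1 - w) by rewrite mulr_gt0 // subr_gt0.
have h2 : 0 < 1 - (1 - p) * w by nra.
split.
  by rewrite /geom_gf divr_ge0 ?(ltW p0) ?(ltW h2) //= ltr_pdivrMr // mul1r; nra.
have e : 1 - (1 - p) * w - p = (1 - p) * (1 - w) by ring.
rewrite /geom_gf; field.
by apply/and4P; split; rewrite ?e gt_eqF // subr_gt0.
Qed.

Lemma convpow_ge0 (f : nat -> R) x y : (forall j, 0 <= f j) -> 0 <= convpow f x y.
Proof.
move=> f0; elim: x y => [|x IH] y /=; first by case: (y == 0%N).
by rewrite /conv sumr_ge0 // => j _; rewrite mulr_ge0.
Qed.

Lemma convpow_pgf (f : nat -> R) u r : (forall j, 0 <= f j) -> 0 <= u ->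
  (\sum_(j <oo) (f j * u ^+ j)%:E = r%:E)%E ->
  forall x, (\sum_(y <oo) (convpow f x y * u ^+ y)%:E = (r ^+ x)%:E)%E.
Proof.
move=> f0 u0 hr; elim=> [|x IH].
  rewrite nneseries_recl //=; last first.
    by move=> k _; rewrite lee_fin mulr_ge0 ?exprn_ge0 //; case: (k == 0%N).
  rewrite eseries0 ?adde0 ?mul1r ?expr0 // => k k1 _ /=.
  by rewrite (gtn_eqF k1) mul0r.
rewrite exprS -(nneseries_cauchy_product _ _ hr IH).
- apply: eq_eseriesr => y _ /=; congr (_%:E); rewrite /conv mulr_suml.
  apply: eq_bigr => j _; rewrite mulrACA -exprD.
  by rewrite subnKC // -ltnS ltn_ord.
- by move=> j; rewrite mulr_ge0 // exprn_ge0.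
- by move=> j; rewrite mulr_ge0 ?convpow_ge0 // exprn_ge0.
Qed.

End GeometricGf.

Section Transition.
Variables (R : realType) (q : R * R).
Hypotheses (q1 : 0 < q.1 < 1) (q2 : 0 < q.2 < 1).

Lemma trans_ge0 x y : 0 <= trans q x y.
Proof. by rewrite mulr_ge0 // convpow_ge0 // => j; exact: geom_pmf_ge0. Qed.

Lemma trans_pgf x (u1 u2 : R) : 0 <= u1 <= 1 -> 0 <= u2 <= 1 ->
  (\esum_(y in [set: nat * nat]) (trans q x y * (u1 ^+ y.1 * u2 ^+ y.2))%:E
   = (geom_gf q.1 u1 ^+ x.1 * geom_gf q.2 u2 ^+ x.2)%:E)%E.
Proof.
move=> hu1 hu2; have /andP[u10 _] := hu1; have /andP[u20 _] := hu2.
rewrite (eq_esum (b := fun y =>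
    ((convpow (geom_pmf q.1) x.1 y.1 * u1 ^+ y.1) *
     (convpow (geom_pmf q.2) x.2 y.2 * u2 ^+ y.2))%:E)); last first.
  by move=> y _; rewrite /trans mulrACA.
have h1 := convpow_pgf (geom_pmf_ge0 q1) u10 (geom_pgf q1 hu1) x.1.
have h2 := convpow_pgf (geom_pmf_ge0 q2) u20 (geom_pgf q2 hu2) x.2.
by apply: esum_pair_mul h1 h2 => j;
  rewrite mulr_ge0 ?exprn_ge0 // convpow_ge0 // => k; exact: geom_pmf_ge0.
Qed.

Lemma trans_pgf_coord x (w : R) (i : 'I_2) : 0 <= w <= 1 ->
  (\esum_(y in [set: nat * nat]) ((trans q x y)%:E * (w ^+ coordt i y)%:E)
   = (geom_gf (par i q) w ^+ coordt i x)%:E)%E.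
Proof.
move=> hw; have h1 : 0 <= (1 : R) <= 1 by rewrite ler01 lexx.
have [p10 _] := andP q1; have [p20 _] := andP q2.
rewrite /coordt /par; case: ifP => _.
- transitivity ((geom_gf q.1 w ^+ x.1 * geom_gf q.2 1 ^+ x.2)%:E)%E.
    by rewrite -trans_pgf //; apply: eq_esum => y _; rewrite expr1n mulr1 EFinM.
  by rewrite geom_gf1 // expr1n mulr1.
- transitivity ((geom_gf q.1 1 ^+ x.1 * geom_gf q.2 w ^+ x.2)%:E)%E.
    by rewrite -trans_pgf //; apply: eq_esum => y _; rewrite expr1n mul1r EFinM.
  by rewrite geom_gf1 // expr1n mul1r.
Qed.

Lemma trans_sum1 x : (\esum_(y in [set: nat * nat]) (trans q x y)%:E = 1)%E.
Proof.
have h1 : 0 <= (1 : R) <= 1 by rewrite ler01 lexx.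
have [p10 _] := andP q1.
have := trans_pgf_coord x ord0 h1; rewrite geom_gf1 // expr1n => <-.
by apply: eq_esum => y _; rewrite expr1n mule1.
Qed.

Lemma trans_extinct x y (i : 'I_2) :
  coordt i x = 0%N -> coordt i y <> 0%N -> trans q x y = 0.
Proof.
rewrite /coordt /trans; case: ifP => _ -> /eqP/negPf /= ->.
  by rewrite mul0r.
by rewrite mulr0.
Qed.

End Transition.

Section RealBounds.
Variable R : realType.

Lemma subrXX_le (a b : R) (x : nat) : 0 <= b <= a -> a <= 1 ->
  a ^+ x - b ^+ x <= x%:R * (a - b).
Proof.
move=> /andP[b0 ba] a1; have a0 := le_trans b0 ba.
rewrite subrXX mulrC; apply: ler_wpM2r; first by rewrite subr_ge0.
have -> : x%:R = \sum_(k < x) (1 : R) by rewrite sumr_const card_ord.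
apply: ler_sum => k _.
by rewrite mulr_ile1 ?exprn_ge0 ?exprn_ile1 // (le_trans ba a1).
Qed.

Lemma invrB_le (a c : R) : 1 <= a -> a <= c -> a^-1 - c^-1 <= c - a.
Proof.
move=> a1 ac.
have a0 : 0 < a by apply: lt_le_trans a1; exact: ltr01.
have c0 : 0 < c by apply: lt_le_trans ac.
have -> : a^-1 - c^-1 = (c - a) / (a * c) by field; rewrite !gt_eqF.
rewrite ler_pdivrMr ?mulr_gt0 //.
have ac1 : 1 <= a * c by rewrite -[1]mulr1 ler_pM // ?ler01 // (le_trans a1 ac).
by rewrite -subr_ge0 -[X in _ - X]mulr1 -mulrBr mulr_ge0 // subr_ge0.
Qed.

Lemma one_sub_expRN_le (th : R) : 1 - expR (- th) <= th.
Proof. by have := expR_ge1Dx (- th); lra. Qed.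

Lemma expRN_odds_le (th : R) : 0 < th -> expR (- th) / (1 - expR (- th)) <= th^-1.
Proof.
move=> th0; have e1 := expR_ge1Dx th.
have eN : expR (- th) * expR th = 1 by rewrite -expRD addNr expR0.
have eN0 := expR_gt0 (- th).
have eN1 : expR (- th) < 1 by rewrite -expR0 ltr_expR oppr_lt0.
rewrite ler_pdivrMr ?subr_gt0 // mulrC ler_pdivlMr //; nra.
Qed.

End RealBounds.

Section Probes.
Variables (R : realType) (S T : R).

(* Test points of the generating function: [1 - large_probe ^+ X] detects
   [X >= expR (S + T)] and [small_probe ^+ X] detects [X <= expR (S - T)]. *)
Definition large_probe : R := expR (- expR (- (S + T))).
Definition small_probe : R := expR (- (expR (T - S) / 2)).

Lemma large_probe_01 : 0 < large_probe < 1.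
Proof. by rewrite expR_gt0 -expR0 ltr_expR oppr_lt0 expR_gt0. Qed.

Lemma small_probe_01 : 0 < small_probe < 1.
Proof. by rewrite expR_gt0 -expR0 ltr_expR oppr_lt0 divr_gt0 ?expR_gt0. Qed.

Lemma indicator_le_probes (X : nat) : (0 < X)%N -> T <= `|ln X%:R - S| ->
  1 <= 2 * (1 - large_probe ^+ X) + 2 * small_probe ^+ X.
Proof.
move=> X0 hT.
have eX : expR (ln X%:R) = X%:R :> R by rewrite lnK // posrE ltr0n.
have [L0 L1] := andP large_probe_01; have [s0 s1] := andP small_probe_01.
have LX1 : large_probe ^+ X <= 1 by rewrite exprn_ile1 ?ltW.
have sX0 : 0 <= small_probe ^+ X by rewrite exprn_ge0 ?ltW.
move: hT; rewrite ler_normr => /orP[hT|hT].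
- have h : 1 <= expR (- (S + T)) * X%:R.
    by rewrite -eX -expRD -[leLHS]expR0 ler_expR; lra.
  suff : large_probe ^+ X <= 2^-1 by lra.
  rewrite /large_probe -expRM_natr mulNr.
  apply: (@le_trans _ _ (expR (-1))); first by rewrite ler_expR lerN2.
  rewrite expRN -[X in _ <= X]invrK lef_pV2 ?posrE ?expR_gt0 //.
  by have := expR_ge1Dx (1 : R); lra.
- have h : expR (T - S) * X%:R <= 1.
    by rewrite -eX -expRD -[leRHS]expR0 ler_expR; lra.
  suff : 2^-1 <= small_probe ^+ X by lra.
  rewrite /small_probe -expRM_natr mulNr.
  apply: (@le_trans _ _ (expR (- 2^-1))); first by have := expR_ge1Dx (- 2^-1 : R); lra.
  by rewrite ler_expR lerN2 mulrAC; lra.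
Qed.

Lemma small_probe_odds : small_probe / (1 - small_probe) <= 2 * expR (S - T).
Proof.
apply: le_trans (expRN_odds_le _) _; first by rewrite divr_gt0 ?expR_gt0.
by rewrite invf_div -expRN opprB.
Qed.

End Probes.

Section LinearFractional.
Variables (R : realType) (A b : R) (G : R -> R).
Hypotheses (A0 : 0 < A) (b0 : 0 <= b).
Hypothesis G_lfrac : forall t, 0 <= t < 1 ->
  0 <= G t < 1 /\ (1 - G t)^-1 = A / (1 - t) + b.

Lemma lfrac_tail t : 0 <= t < 1 -> 1 - G t <= (1 - t) / A.
Proof.
move=> t01; have [t0 t1] := andP t01; have [_ GE] := G_lfrac t01.
have h : 0 < A / (1 - t) by rewrite divr_gt0 // subr_gt0.
have hD : 0 < A / (1 - t) + b by apply: lt_le_trans h _; rewrite lerDl.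
by rewrite -[1 - G t]invrK GE -(invf_div A (1 - t)) lef_pV2 ?posrE // lerDl.
Qed.

Lemma lfrac_increment t : 0 <= t < 1 ->
  G 0 <= G t /\ G t - G 0 <= A * (t / (1 - t)).
Proof.
move=> t01; have [t0 t1] := andP t01.
have z01 : 0 <= (0 : R) < 1 by rewrite lexx ltr01.
have [/andP[G00 G01] G0E] := G_lfrac z01.
have [_ GtE] := G_lfrac t01.
set D0 := A / (1 - 0) + b in G0E; set Dt := A / (1 - t) + b in GtE.
have D01 : 1 <= D0 by rewrite -G0E invf_ge1 ?subr_gt0 //; lra.
have D0t : D0 <= Dt.
  by rewrite /D0 /Dt lerD2r subr0 divr1 ler_pdivlMr ?subr_gt0 // ger_pMr // lerBlDr lerDl.
have incr : G t - G 0 = D0^-1 - Dt^-1 by rewrite -G0E -GtE !invrK; ring.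
split.
  rewrite -subr_ge0 incr subr_ge0 lef_pV2 ?posrE //; lra.
rewrite incr; apply: le_trans (invrB_le D01 D0t) _.
suff -> : Dt - D0 = A * (t / (1 - t)) by [].
by rewrite /Dt /D0 subr0 divr1; field; rewrite gt_eqF // subr_gt0.
Qed.

Lemma lfrac_probe_bound S T (x : nat) : A = expR (- S) ->
  2 * (1 - G (large_probe S T) ^+ x) +
  2 * (G (small_probe S T) ^+ x - G 0 ^+ x) <= 6 * x%:R * expR (- T).
Proof.
move=> AE; set L := large_probe S T; set s := small_probe S T.
have L01 : 0 <= L < 1 by have /andP[L0 ->] := large_probe_01 S T; rewrite ltW.
have s01 : 0 <= s < 1 by have /andP[s0 ->] := small_probe_01 S T; rewrite ltW.
have [/andP[GL0 GL1] _] := G_lfrac L01.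
have [/andP[Gs0 Gs1] _] := G_lfrac s01.
have z01 : 0 <= (0 : R) < 1 by rewrite lexx ltr01.
have [/andP[G00 _] _] := G_lfrac z01.
have [G0s incr] := lfrac_increment s01.
have tail : 1 - G L <= expR (- T).
  apply: le_trans (lfrac_tail L01) _; rewrite ler_pdivrMr // AE -expRD.
  by rewrite -opprD [T + S]addrC; exact: one_sub_expRN_le.
have gap : G s - G 0 <= 2 * expR (- T).
  apply: le_trans incr _; apply: le_trans (ler_wpM2l (ltW A0) (small_probe_odds S T)) _.
  by rewrite AE mulrCA -expRD addKr.
have P1 : 1 ^+ x - G L ^+ x <= x%:R * (1 - G L).
  by apply: subrXX_le (lexx 1); rewrite GL0 ltW.
have P2 : G s ^+ x - G 0 ^+ x <= x%:R * (G s - G 0).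
  by apply: subrXX_le (ltW Gs1); rewrite G00 G0s.
have x0 : 0 <= x%:R :> R by rewrite ler0n.
rewrite expr1n in P1; nra.
Qed.

End LinearFractional.

Section QuenchedLaw.
Variables (R : realType) (P : nat -> R * R).
Hypothesis P01 : forall m, 0 < (P m).1 < 1 /\ 0 < (P m).2 < 1.

Lemma par_01 i m : 0 < par i (P m) < 1.
Proof. by rewrite /par; case: ifP => _; case: (P01 m). Qed.

Lemma expR_Xenv i m : expR (- Xenv P i m) = par i (P m) / (1 - par i (P m)).
Proof.
have /andP[p0 p1] := par_01 i m.
by rewrite /Xenv expRN lnK ?invf_div // posrE divr_gt0 // subr_gt0.
Qed.

(* [gf_iter i j d] is the generating function of the type-[i] population at
   time [j + d] descending from a single type-[i] individual at time [j]. *)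
Fixpoint gf_iter (i : 'I_2) (j d : nat) (t : R) : R :=
  if d is d'.+1 then geom_gf (par i (P j.+1)) (gf_iter i j.+1 d' t) else t.

Lemma gf_iter_01 i d j t : 0 <= t <= 1 -> 0 <= gf_iter i j d t <= 1.
Proof.
by elim: d j => [|d IH] j ht //=; apply: geom_gf_01 (par_01 i j.+1) (IH _ ht).
Qed.

Lemma gf_iter1 i d j : gf_iter i j d 1 = 1.
Proof.
elim: d j => [|d IH] j //=.
by rewrite IH geom_gf1 //; case/andP: (par_01 i j.+1).
Qed.

Lemma gf_iter_lfrac i d j : exists2 b : R, 0 <= b &
  forall t, 0 <= t < 1 -> 0 <= gf_iter i j d t < 1 /\
    (1 - gf_iter i j d t)^-1
    = expR (- \sum_(j.+1 <= l < (j + d).+1) Xenv P i l) / (1 - t) + b.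
Proof.
elim: d j => [|d IH] j.
  exists 0 => // t t01 /=.
  by rewrite addn0 big_geq // oppr0 expR0 addr0 div1r.
have [b b0 hb] := IH j.+1.
have /andP[p0 p1] := par_01 i j.+1.
exists (par i (P j.+1) / (1 - par i (P j.+1)) * b + 1).
  by rewrite addr_ge0 // mulr_ge0 // divr_ge0 ?subr_ge0 ?ltW.
move=> t t01; have [G01 GE] := hb t t01.
have [f01 fE] := geom_gf_lfrac (par_01 i j.+1) G01.
have sumE : \sum_(j.+1 <= l < (j + d.+1).+1) Xenv P i l
    = Xenv P i j.+1 + \sum_(j.+2 <= l < (j.+1 + d).+1) Xenv P i l.
  by rewrite addnS -addSn big_ltn // ltnS leq_addr.
split=> //=; rewrite fE GE sumE opprD expRD expR_Xenv.
field; case/andP: t01 => _ t1.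
by apply/andP; split; rewrite gt_eqF // subr_gt0.
Qed.

Local Open Scope ereal_scope.

Let trans_ge0E m x y : 0 <= (trans (P m) x y)%:E.
Proof. by have [q1 q2] := P01 m; rewrite lee_fin trans_ge0. Qed.

Lemma qlaw_ge0 m j x E : 0 <= qlaw P j m x E.
Proof.
elim: m j x E => [|m IH] j x E /=; first by rewrite lee_fin ler0n.
by apply: esum_ge0 => y _; rewrite mule_ge0.
Qed.

Lemma qlaw_le1 m j x E : qlaw P j m x E <= 1.
Proof.
elim: m j x E => [|m IH] j x E /=; first by rewrite lee_fin; case: (E _).
have [q1 q2] := P01 j.+1.
rewrite -(trans_sum1 q1 q2 x); apply: le_esum => y _.
by rewrite -[leRHS]mule1; apply: lee_wpmul2l.
Qed.

Lemma qlaw_false m j x (E : seq (nat * nat) -> bool) :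
  (forall s, ~~ E (x :: s)) -> qlaw P j m x E = 0.
Proof.
elim: m j x E => [|m IH] j x E nE /=; first by rewrite (negPf (nE [::])).
by apply: esum1 => y _; rewrite IH ?mule0.
Qed.

Lemma qlaw_union N m j x (E : 'I_N -> seq (nat * nat) -> bool) :
  qlaw P j m x (fun s => [exists k, E k s]) <= \sum_(k < N) qlaw P j m x (E k).
Proof.
elim: m j x E => [|m IH] j x E /=.
  case: existsP => [[k0 Ek0]|_]; last by apply: sume_ge0 => k _; rewrite lee_fin.
  by rewrite (bigD1 k0) //= Ek0 leeDl // sume_ge0 // => k _; rewrite lee_fin.
apply: (@le_trans _ _ (\esum_(y in [set: nat * nat]) \sum_(k < N)
   ((trans (P j.+1) x y)%:E * qlaw P j.+1 m y (fun s => E k (x :: s))))).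
  apply: le_esum => y _; rewrite -ge0_sume_distrr => [|k _]; last exact: qlaw_ge0.
  exact: lee_wpmul2l (IH j.+1 y (fun k s => E k (x :: s))).
by rewrite esum_sum // => y k _ _; rewrite mule_ge0 ?qlaw_ge0.
Qed.

Definition extinct_absorbs (i : 'I_2) : rel (nat * nat) :=
  fun a b => (coordt i a == 0%N) ==> (coordt i b == 0%N).

Lemma qlaw_le_absorbing i m j x (E E' : seq (nat * nat) -> bool) :
  (forall s, path (extinct_absorbs i) x s -> E (x :: s) -> E' (x :: s)) ->
  qlaw P j m x E <= qlaw P j m x E'.
Proof.
elim: m j x E E' => [|m IH] j x E E' EE' /=.
  by case: (E [:: x]) (EE' [::] erefl) => [->//|_]; rewrite lee_fin ler0n.
apply: le_esum => y _.
have [->|ne] := eqVneq (trans (P j.+1) x y) 0%R; first by rewrite !mul0e.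
apply: lee_wpmul2l => //; apply: IH => s ys; apply: EE'; rewrite /= ys andbT.
apply/implyP => /eqP x0; apply/eqP; apply: contraNeq ne => /eqP y0.
by apply/eqP; apply: trans_extinct x0 y0.
Qed.

Lemma path_alive i x s k n : path (extinct_absorbs i) x s -> (k <= n)%N ->
  (0 < coordt i (nth (0%N, 0%N) (x :: s) n))%N ->
  (0 < coordt i (nth (0%N, 0%N) (x :: s) k))%N.
Proof.
move=> abs kn alive.
have coord0 : coordt i (0%N, 0%N) = 0%N by rewrite /coordt; case: ifP.
have ns : (n < size (x :: s))%N.
  by rewrite ltnNge; apply: contraTN alive => /(nth_default (0%N, 0%N)) ->; rewrite coord0.
have abs_trans : transitive (extinct_absorbs i).
  by move=> b a c /implyP ab /implyP bc; apply/implyP => /ab /bc.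
have := @sorted_leq_nth _ _ abs_trans (fun a => implybb _) (0%N, 0%N) (x :: s) abs k n.
rewrite !inE (leq_ltn_trans kn ns) ns => /(_ isT isT kn) /implyP abs_kn.
by move: alive; rewrite !lt0n; apply: contra.
Qed.

Fixpoint qexp (j d : nat) (psi : nat * nat -> \bar R) (x : nat * nat) : \bar R :=
  if d is d'.+1 then
    \esum_(y in [set: nat * nat]) ((trans (P j.+1) x y)%:E * qexp j.+1 d' psi y)
  else psi x.

Lemma qexp_ge0 d j psi x : (forall y, 0 <= psi y) -> 0 <= qexp j d psi x.
Proof.
elim: d j x => [|d IH] j x psi0 //=.
by apply: esum_ge0 => y _; rewrite mule_ge0 ?IH.
Qed.

Lemma qexp_add d j psi phi x : (forall y, 0 <= psi y) -> (forall y, 0 <= phi y) ->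
  qexp j d (fun y => psi y + phi y) x = qexp j d psi x + qexp j d phi x.
Proof.
elim: d j x => [|d IH] j x psi0 phi0 //=.
rewrite -esumD => [|y _|y _]; try by rewrite mule_ge0 ?qexp_ge0.
by apply: eq_esum => y _; rewrite IH // ge0_muleDr ?qexp_ge0.
Qed.

Lemma qexp_scale (c : R) d j psi x : (0 <= c)%R -> (forall y, 0 <= psi y) ->
  qexp j d (fun y => c%:E * psi y) x = c%:E * qexp j d psi x.
Proof.
move=> c0; elim: d j x => [|d IH] j x psi0 //=.
rewrite -esum_pairZl // => [|y]; last by rewrite mule_ge0 ?qexp_ge0.
by apply: eq_esum => y _; rewrite IH // muleCA.
Qed.

Lemma qexp_pgf i d j x (t : R) : (0 <= t <= 1)%R ->
  qexp j d (fun y => (t ^+ coordt i y)%:E) x = (gf_iter i j d t ^+ coordt i x)%:E.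
Proof.
elim: d j x => [|d IH] j x t01 //=.
have [q1 q2] := P01 j.+1.
under eq_esum do rewrite IH //.
by rewrite trans_pgf_coord // gf_iter_01.
Qed.

Lemma qexp_pgfB i d j x (t1 t2 : R) : (0 <= t2 <= t1)%R -> (t1 <= 1)%R ->
  qexp j d (fun y => (t1 ^+ coordt i y - t2 ^+ coordt i y)%:E) x
  = (gf_iter i j d t1 ^+ coordt i x - gf_iter i j d t2 ^+ coordt i x)%:E.
Proof.
move=> /andP[t20 t21] t11; have t10 := le_trans t20 t21.
have t1_01 : (0 <= t1 <= 1)%R by rewrite t10 t11.
have t2_01 : (0 <= t2 <= 1)%R by rewrite t20 (le_trans t21 t11).
have t1E : (fun y => (t1 ^+ coordt i y)%:E) = (fun y =>
    (t1 ^+ coordt i y - t2 ^+ coordt i y)%:E + (t2 ^+ coordt i y)%:E).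
  by apply/funext => y; rewrite -EFinD subrK.
have := qexp_pgf i d j x t1_01; rewrite t1E qexp_add => [|y|y]; last 2 first.
- by rewrite lee_fin subr_ge0 lerXn2r ?nnegrE.
- by rewrite lee_fin exprn_ge0.
rewrite qexp_pgf //; case: (qexp _ _ _ x) => [r||] //= [<-].
by rewrite addrK.
Qed.

Lemma qlaw_le_qexp d m j x (E : seq (nat * nat) -> bool) psi : (d <= m)%N ->
  (forall y, 0 <= psi y) ->
  (forall s, ((E (x :: s))%:R)%:E <= psi (nth (0%N, 0%N) (x :: s) d)) ->
  qlaw P j m x E <= qexp j d psi x.
Proof.
elim: d m j x E => [|d IH] m j x E dm psi0 Epsi /=.
  have [psi1|psi1] := leP 1 (psi x); first exact: le_trans (qlaw_le1 _ _ _ _) psi1.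
  rewrite qlaw_false // => s; apply/negP => Es.
  by have := Epsi s; rewrite Es /= => /(lt_le_trans psi1); rewrite ltxx.
case: m dm => [//|m] dm /=.
apply: le_esum => y _; apply: lee_wpmul2l => //.
by apply: IH => // s; exact: (Epsi (y :: s)).
Qed.

Definition large_dev_at (i : 'I_2) (T : R) (k : nat) (s : seq (nat * nat)) : bool :=
  (0 < coordt i (nth (0%N, 0%N) s k))%N &&
  (T <= `| ln (coordt i (nth (0%N, 0%N) s k))%:R - Senv P i k |)%R.

Lemma qlaw_large_dev_at i (T : R) z k n : (k <= n)%N ->
  qlaw P 0 n z (large_dev_at i T k) <= (6 * (coordt i z)%:R * expR (- T))%:E.
Proof.
move=> kn; set S := Senv P i k.
set L := large_probe S T; set s := small_probe S T.
have [L0 L1] := andP (large_probe_01 S T); have [s0 s1] := andP (small_probe_01 S T).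
have hiE Y : (0 <= 1 ^+ Y - L ^+ Y)%R by rewrite expr1n subr_ge0 exprn_ile1 ?ltW.
have loE Y : (0 <= s ^+ Y - 0 ^+ Y)%R by rewrite subr_ge0 lerXn2r ?nnegrE ?(ltW s0).
pose psi y := 2%:E * (1 ^+ coordt i y - L ^+ coordt i y)%:E
            + 2%:E * (s ^+ coordt i y - 0 ^+ coordt i y)%:E.
have psi0 y : 0 <= psi y by rewrite adde_ge0 // mule_ge0 // lee_fin.
apply: (@le_trans _ _ (qexp 0 k psi z)).
  apply: qlaw_le_qexp => // w; rewrite /large_dev_at.
  case/boolP: (_ && _) => [/andP[Y0 hT] | _]; last exact: psi0.
  rewrite /psi -!EFinM -EFinD lee_fin expr1n.
  have -> : (0 ^+ coordt i (nth (0%N, 0%N) (z :: w) k) = 0 :> R)%R.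
    by rewrite expr0n gtn_eqF.
  rewrite subr0.
  exact: indicator_le_probes Y0 hT.
rewrite /psi qexp_add => [|y|y]; try by rewrite mule_ge0 // lee_fin.
rewrite !qexp_scale // => [|y|y]; try by rewrite lee_fin.
have s_01 : (0 <= (0 : R) <= s)%R by rewrite lexx ltW.
have L_01 : (0 <= L <= 1)%R by rewrite !ltW.
rewrite !qexp_pgfB ?s_01 ?L_01 ?(ltW s1) ?lexx //.
rewrite gf_iter1 // expr1n -!EFinM -EFinD lee_fin.
have [b b0 G_lfrac] := gf_iter_lfrac i k 0.
by apply: (lfrac_probe_bound (expR_gt0 _) b0 G_lfrac T); rewrite add0n.
Qed.

End QuenchedLaw.

Unset Implicit Arguments. Set Strict Implicit.

Theorem lemma9 (R : realType) :
  exists C : R,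
  forall (P : nat -> R * R),
    (forall m : nat, 0 < (P m).1 < 1 /\ 0 < (P m).2 < 1) ->
  forall (z : nat * nat) (eps : R) (i : 'I_2) (n : nat),
    0 < eps -> (0 < n)%N ->
    (quenched P z n (dev_event P i n eps)
      <= (C * (coordt i z)%:R * n%:R * expR (- (eps * Num.sqrt (n%:R))))%:E)%E.
Proof.
exists 12 => P P01 z eps i n eps0 n0.
set T := eps * Num.sqrt n%:R; rewrite /quenched.
apply: (@le_trans _ _ (qlaw P 0 n z (fun s => [exists k : 'I_n.+1, large_dev_at P i T k s]))).
  apply: (@qlaw_le_absorbing _ _ P01 i) => s abs /andP[/existsP[k devk] alive].
  apply/existsP; exists k; rewrite /large_dev_at devk andbT.
  by apply: path_alive abs _ alive; rewrite -ltnS; exact: ltn_ord.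
apply: le_trans (qlaw_union P01 _ _ _ _) _.
apply: (@le_trans _ _ (\sum_(k < n.+1) (6 * (coordt i z)%:R * expR (- T))%:E)%E).
  by apply: lee_sum => k _; apply: (qlaw_large_dev_at P01); rewrite -ltnS; exact: ltn_ord.
rewrite sumEFin sumr_const card_ord lee_fin -mulr_natr -natr1.
have : 0 <= (coordt i z)%:R * expR (- T) * (n%:R - 1).
  by rewrite !mulr_ge0 ?ler0n ?expR_ge0 // subr_ge0 ler1n.
nra.
Qed.
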